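(* Let $G$ be a non-abelian finite simple group such that $\mathrm{Aut}(G)$ is a split extension of $\mathrm{Inn}(G)$ by a group of order $2$. Then $G$ has the eigenvalue one property.
   Context: A finite group $K$ has the eigenvalue one property if for every irreducible non-trivial $\mathbb{R}K$-module $W$ of odd dimension, affording $\sigma\colon K\to\mathrm{GL}(W)$, and every $m\in N_{\mathrm{GL}(W)}(\sigma(K))$ of finite order, there is $k\in K$ such that $\sigma(k)m$ has eigenvalue $1$. *)

From HB Require Import structures.
From mathcomp Require Import all_boot all_order all_algebra all_fingroup all_solvable.
From mathcomp Require Import mxrepresentation.
From mathcomp Require Import Rstruct.
From Stdlib Require Rdefinitions.

Set Implicit Arguments.
Unset Strict Implicit.
Unset Printing Implicit Defensive.

Import GRing.Theory.
Local Open Scope ring_scope.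
Notation R := Rdefinitions.R.

Definition Inn (gT : finGroupType) (G : {group gT}) : {set {perm gT}} :=
  (conj_aut G @* G)%g.

Definition aut_split_by_order2 (gT : finGroupType) (G : {group gT}) : Prop :=
  exists T : {group {perm gT}}, #|T| = 2%N /\ (Inn G ><| T = Aut G)%g.

Definition normalizes_image (gT : finGroupType) (K : {group gT}) (n : nat)
    (rG : mx_representation R K n) (m : 'M[R]_n) : Prop :=
  m \in unitmx /\
  (forall k, k \in K -> exists2 h, h \in K & m *m rG k *m invmx m = rG h) /\
  (forall h, h \in K -> exists2 k, k \in K & m *m rG k *m invmx m = rG h).

(* Irreducible RK-modules of dimension n are the irreducible matrix
   representations K -> GL_n(R) (row-vector convention of MathComp);
   "non-trivial" means sigma is not the trivial representation. *)
Definition eigenvalue_one_property (gT : finGroupType) (K : {group gT}) : Prop :=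
  forall (n : nat) (rG : mx_representation R K n),
    odd n ->
    mx_irreducible rG ->
    (exists2 g, g \in K & rG g != 1%:M) ->
    forall m : 'M[R]_n,
      normalizes_image rG m ->
      (exists2 e, (0 < e)%N & m ^+ e = 1%:M) ->
      exists2 k, k \in K & eigenvalue (rG k *m m) 1.

(* Write sigma for the representation.  A normalising matrix m induces an
   automorphism of G, which the splitting Aut G = Inn G ><| T writes as an
   involution t in T followed by conjugation by some k in G; the matrix
   M = sigma(k) m then satisfies M sigma(x) = sigma(t x) M.  Hence M^2 commutes
   with sigma(G); in odd dimension every such matrix has a real eigenvalue, so
   Schur's lemma makes M^2 a scalar, and comparing determinants shows it is 1.
   Either M has eigenvalue 1, or M = -1 and sigma(h k) m = -sigma(h) has
   eigenvalue 1 for any involution h of G.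
   An involution exists without appealing to Feit-Thompson, because a group of
   odd order has no nontrivial irreducible real representation of odd degree:
   odd-order groups have no real classes, so there is a conjugation-stable set
   P containing exactly one of g, g^-1 for each g <> 1.  Schur's lemma and an
   invariant inner product give 1 + 2 sum_(g in P) sigma(g) = 0, and taking
   traces against sigma(h) yields (1 + 2 N) chi = 0 for the character chi and
   an integer matrix N; det (1 + 2 N) is odd, so chi = 0, contradicting
   chi(1) = n. *)

From mathcomp Require Import all_boot all_order all_algebra all_fingroup all_solvable.
From mathcomp Require Import mxrepresentation polyrcf Rstruct.

Set Implicit Arguments.
Unset Strict Implicit.
Unset Printing Implicit Defensive.

Import Order.TTheory GRing.Theory Num.Theory.

Local Open Scope group_scope.

Section OddOrder.

Variables (gT : finGroupType) (G : {group gT}).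

Lemma mem_cycle_sqr (x : gT) : odd #[x] -> x \in <[x ^+ 2]>.
Proof. by rewrite -coprimen2 -generator_coprime => /eqP <-; exact: cycle_id. Qed.

Lemma odd_conjg_invg_eq1 g x :
  odd #|G| -> g \in G -> x \in G -> g ^ x = g^-1 -> g = 1.
Proof.
move=> oddG Gg Gx gx.
have oddG_order y : y \in G -> odd #[y].
  by move=> Gy; exact: dvdn_odd (order_dvdG Gy) oddG.
have cg_x2 : x ^+ 2 \in 'C[g].
  by rewrite cent1C; apply/cent1P/commgP/conjg_fixP; rewrite conjgM gx conjVg gx invgK.
have cg_x : x \in 'C[g].
  by apply: subsetP (mem_cycle_sqr (oddG_order x Gx)); rewrite cycle_subG.
have g_x : g ^ x = g by move/cent1P: cg_x => /commute_sym/commgP/conjg_fixP.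
have g2 : g ^+ 2 = 1 by rewrite expgS expg1 -{2}g_x gx mulgV.
by have := mem_cycle_sqr (oddG_order g Gg); rewrite g2 cycle1 => /set1gP.
Qed.

(* One class out of each pair {C, C^-1} of mutually inverse conjugacy classes,
   namely the one whose representative comes first in the enumeration of gT. *)
Definition inv_half : {set gT} :=
  [set g in G | enum_rank (repr (g ^: G)) < enum_rank (repr (g^-1 ^: G))]%N.

Lemma inv_half_sub : inv_half \subset G.
Proof. by apply/subsetP => g; rewrite inE => /andP[]. Qed.

Lemma inv_halfJ g h : h \in G -> (g ^ h \in inv_half) = (g \in inv_half).
Proof. by move=> Gh; rewrite !inE groupJr // -conjVg !classGidl. Qed.

Lemma inv_half1 : 1 \notin inv_half.
Proof. by rewrite inE invg1 ltnn andbF. Qed.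

Lemma inv_halfV g : odd #|G| -> g \in G -> g != 1 ->
  (g^-1 \in inv_half) = (g \notin inv_half).
Proof.
move=> oddG Gg ntg.
have neq_repr : repr (g ^: G) != repr (g^-1 ^: G).
  apply: contra ntg => /eqP eq_repr; apply/eqP.
  have /imsetP[a Ga ea] : repr (g ^: G) \in g^-1 ^: G.
    by rewrite eq_repr (mem_repr _ (class_refl _ _)).
  have /imsetP[b Gb eb] := mem_repr _ (class_refl G g).
  apply: (odd_conjg_invg_eq1 oddG Gg (groupM Gb (groupVr Ga))).
  by rewrite conjgM -eb ea conjgK.
rewrite !inE groupV Gg invgK /= -leqNgt ltn_neqAle eq_sym.
by rewrite (inj_eq (@ord_inj _)) (inj_eq enum_rank_inj) neq_repr.
Qed.

Lemma sum_inv_half (M : nmodType) (F : gT -> M) : odd #|G| ->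
  (\sum_(g in G) F g =
     F 1%g + \sum_(g in inv_half) F g + \sum_(g in inv_half) F g^-1%g)%R.
Proof.
move=> oddG; rewrite (bigD1 1) //= -addrA; congr (_ + _)%R.
rewrite (bigID (mem inv_half)) /=; congr (_ + _)%R.
  apply: eq_bigl => g; case Pg: (g \in inv_half); last by rewrite !andbF.
  rewrite (subsetP inv_half_sub) // andbT; apply: contraTneq Pg => ->; exact: inv_half1.
rewrite (reindex_inj invg_inj) /=; apply: eq_bigl => g; rewrite groupV eq_invg1.
case Gg: (g \in G) => /=; last first.
  by apply/esym/negP => /(subsetP inv_half_sub); rewrite Gg.
have [->|ntg] := eqVneq g 1; first by rewrite (negPf inv_half1).
by rewrite -(inv_halfV oddG) ?groupV ?eq_invg1 ?invgK.
Qed.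

End OddOrder.

Local Open Scope ring_scope.

Lemma det_1D2_neq0 k (N : 'M[int]_k) : \det (1%:M + N *+ 2) != 0.
Proof.
have mod2 : map_mx (intr : int -> 'Z_2) (1%:M + N *+ 2) = 1%:M.
  have two0 (x : 'Z_2) : x *+ 2 = 0 by rewrite -mulr_natr pchar_Zp // mulr0.
  apply/matrixP => i j; rewrite !mxE rmorphD -mulr2n [X in _ + X]rmorphMn.
  by rewrite two0 addr0 rmorph_nat.
apply: contra_neq (@oner_neq0 'Z_2) => det0.
by rewrite -(det1 _ k) -mod2 det_map_mx det0 rmorph0.
Qed.

Lemma translate_sum_mul2_eq0 (F : numFieldType) (gT : finGroupType)
    (G : {group gT}) (P : {set gT}) (f : gT -> F) :
  P \subset G -> {in G, forall h, f h + (\sum_(g in P) f (g * h)%g) *+ 2 = 0} ->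
  {in G, forall h, f h = 0}.
Proof.
move=> sPG eq_f h Gh.
pose N : 'M[int]_#|G| := \matrix_(i, j) ((enum_val j * (enum_val i)^-1)%g \in P)%:R.
pose u : 'cV[F]_#|G| := \col_j f (enum_val j).
pose A : 'M[F]_#|G| := map_mx intr (1%:M + N *+ 2).
have Au : A *m u = 0.
  apply/matrixP => i k; rewrite !mxE -[RHS](eq_f (enum_val i)) ?enum_valP //.
  under eq_bigr do rewrite !mxE -mulr2n rmorphD rmorph_nat rmorphMn rmorph_nat mulrDl.
  rewrite big_split /=; congr (_ + _).
    rewrite (bigD1 i) //= eqxx mul1r big1 ?addr0 // => j /negPf.
    by rewrite eq_sym => ->; rewrite mul0r.
  under eq_bigr do rewrite mulrnAl.
  rewrite sumrMnl; congr (_ *+ 2).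
  have Gi := enum_valP i; set x := enum_val i in Gi *.
  transitivity (\sum_(j < #|G| | (enum_val j * x^-1)%g \in P) f (enum_val j)).
    by rewrite [RHS]big_mkcond; apply: eq_bigr => j _; case: ifP; rewrite ?mul1r ?mul0r.
  rewrite -(big_enum_val_cond (fun y => (y * x^-1)%g \in P) f).
  rewrite (reindex_inj (mulIg x)); apply: eq_bigl => g /=.
  rewrite mulgK andb_idl // => Pg; exact: groupM (subsetP sPG g Pg) Gi.
have unitA : A \in unitmx.
  by rewrite unitmxE unitfE det_map_mx intr_eq0 det_1D2_neq0.
have u0 : u = 0 by rewrite -(mulKmx unitA u) Au mulmx0.
by move/matrixP/(_ (enum_rank_in Gh h) 0): u0; rewrite !mxE enum_rankK_in.
Qed.

Lemma detX (R : comPzRingType) n (A : 'M[R]_n) k : \det (A ^+ k) = \det A ^+ k.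
Proof.
elim: k => [|k IHk]; first by rewrite !expr0 det1.
by rewrite !exprS -mulmxE det_mulmx IHk.
Qed.

Lemma det_sqr_eq1 (R : realDomainType) n (A : 'M[R]_n) e :
  (0 < e)%N -> A ^+ e = 1 -> \det A ^+ 2 = 1.
Proof.
move=> e_gt0 Ae1; apply/eqP; rewrite -(pexpr_eq1 e_gt0) ?sqr_ge0 //.
by rewrite exprAC -detX Ae1 det1 expr1n.
Qed.

Lemma odd_sqrmx_scalar_eq1 (R : realDomainType) n (M : 'M[R]_n) a :
  odd n -> M *m M = a%:M -> \det M ^+ 2 = 1 -> M *m M = 1%:M.
Proof.
move=> odd_n M2 detM.
have an1 : a ^+ n = 1 by rewrite -det_scalar -M2 det_mulmx -expr2.
have a_gt0 : 0 < a by rewrite -(exprn_odd_gt0 _ odd_n) an1 ltr01.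
have n_gt0 : (0 < n)%N by case: n odd_n {M M2 detM an1}.
suff a1 : a = 1 by rewrite M2 a1.
by apply/eqP; rewrite -(pexpr_eq1 n_gt0 (ltW a_gt0)) an1.
Qed.

Section Eigenvalues.

Variables (F : fieldType) (n : nat).

Lemma eigenvalueN (A : 'M[F]_n) a : eigenvalue (- A) a = eigenvalue A (- a).
Proof.
apply/eigenvalueP/eigenvalueP => -[v vA nz_v]; exists v => //.
  by rewrite scaleNr -vA mulmxN opprK.
by rewrite mulmxN vA scaleNr opprK.
Qed.

Lemma involutive_mx_no_eigenvalue1 (M : 'M[F]_n) :
  M *m M = 1%:M -> ~~ eigenvalue M 1 -> M = - 1%:M.
Proof.
move=> M2 /negbNE/eqP eig0; apply/eqP; rewrite -subr_eq0 opprK.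
have : ((M + 1%:M)%R <= eigenspace M 1)%MS.
  by apply/eigenspaceP; rewrite mulmxDl M2 mul1mx scale1r addrC.
by rewrite eig0 submx0.
Qed.

End Eigenvalues.

Section Representation.

Variables (F : fieldType) (gT : finGroupType) (G : {group gT}) (n : nat).
Variable rG : mx_representation F G n.

Lemma repr_mx_expg x k : x \in G -> rG (x ^+ k)%g = rG x ^+ k.
Proof.
move=> Gx; elim: k => [|k IHk]; first by rewrite expg0 expr0 repr_mx1.
by rewrite expgS exprS repr_mxM ?groupX // IHk mulmxE.
Qed.

Lemma simple_repr_faithful g :
  simple G -> g \in G -> rG g != 1%:M -> mx_faithful rG.
Proof.
move=> /simpleP[_ simG] Gg ntg.
have [ker1|kerG] := simG _ (rker_normal rG); first by rewrite /mx_faithful ker1.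
have /rkerP[_ g1] : g \in rker rG by rewrite kerG.
by rewrite g1 eqxx in ntg.
Qed.

Lemma sum_repr_eq0 g :
  mx_irreducible rG -> g \in G -> rG g != 1%:M -> \sum_(x in G) rG x = 0.
Proof.
move=> irr Gg ntg.
have fix0 : rfix_mx rG G = 0.
  apply: contraNeq ntg => nz_fix.
  have [_ /(_ _ (rfix_mx_module rG) nz_fix)] := (mx_irrP rG).1 irr.
  by rewrite -sub1mx => /rfix_mxP/(_ g Gg); rewrite mul1mx => ->.
suff : ((\sum_(x in G) rG x)%R <= rfix_mx rG G)%MS by rewrite fix0 submx0 => /eqP.
apply/rfix_mxP => h Gh.
rewrite mulmx_suml (reindex_inj (mulIg h^-1)%g) /=.
apply: eq_big => [x|x Gx]; first by rewrite groupMr ?groupV.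
by rewrite -repr_mxM ?mulgKV.
Qed.

Lemma repr_normalizer_aut m :
  mx_faithful rG -> m \in unitmx ->
  {in G, forall k, exists2 h, h \in G & m *m rG k *m invmx m = rG h} ->
  exists2 a, a \in Aut G & {in G, forall x, rG (a x) = m *m rG x *m invmx m}.
Proof.
move=> faithful m_unit m_norm; have rG_inj := mx_faithful_inj faithful.
pose alpha k := odflt 1%g [pick h in G | m *m rG k *m invmx m == rG h].
have alphaP k : k \in G -> alpha k \in G /\ rG (alpha k) = m *m rG k *m invmx m.
  move=> Gk; rewrite /alpha; case: pickP => [h /andP[Gh /eqP ->] // | none].
  by have [h Gh E] := m_norm k Gk; have := none h; rewrite Gh E eqxx.
have alphaM : {in G &, {morph alpha : x y / (x * y)%g}}.
  move=> x y Gx Gy; have [Gxy rGxy] := alphaP _ (groupM Gx Gy).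
  have [[Gax rGax] [Gay rGay]] := (alphaP x Gx, alphaP y Gy).
  apply: rG_inj; rewrite ?groupM // repr_mxM // rGxy rGax rGay repr_mxM //.
  by rewrite !mulmxA mulmxKV.
pose alpham := Morphism alphaM.
have conj_inj : injective (fun A : 'M_n => m *m A *m invmx m).
  apply: (can_inj (g := fun A => invmx m *m A *m m)) => A.
  by rewrite !mulmxA mulVmx // mul1mx mulmxKV.
have alpha_inj : ('injm alpham)%g.
  apply/injmP => x y Gx Gy /= /(congr1 rG).
  by rewrite (alphaP x Gx).2 (alphaP y Gy).2 => /conj_inj; apply: rG_inj.
have alphaG : (alpham @* G)%g = G.
  apply/eqP; rewrite eqEcard card_injm // leqnn andbT.
  by apply/subsetP => _ /morphimP[x _ Gx ->]; rewrite (alphaP x Gx).1.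
exists (aut alpha_inj alphaG); first exact: Aut_aut.
by move=> x Gx; rewrite autE // (alphaP x Gx).2.
Qed.

Lemma twisted_sqr_centgmx (t : gT -> gT) M :
  {in G, forall x, t x \in G} -> {in G, forall x, t (t x) = x} ->
  {in G, forall x, M *m rG x = rG (t x) *m M} -> centgmx rG (M *m M).
Proof.
move=> tG tK twist; apply/centgmxP => x Gx.
by rewrite -mulmxA twist // mulmxA twist ?tG // tK // mulmxA.
Qed.

Lemma even_faithful_eigenvalueN1 :
  (2 %| #|G|)%N -> mx_faithful rG -> exists2 g, g \in G & eigenvalue (rG g) (-1).
Proof.
move=> evenG faithful; have [t Gt ot] := Cauchy (isT : prime 2) evenG.
have t2 : (t * t)%g = 1%g by rewrite -expg2 -ot expg_order.
have nt1 : t != 1%g by apply/eqP => t1; rewrite t1 order1 in ot.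
have ntt : rG t - 1%:M != 0.
  by rewrite subr_eq0 -(repr_mx1 rG) (inj_in_eq (mx_faithful_inj faithful)).
exists t => //; have [v /submxP[w ->] nz_v] := rowV0Pn ntt.
apply/eigenvalueP; exists (w *m (rG t - 1%:M)) => //.
by rewrite -mulmxA mulmxBl -repr_mxM // t2 repr_mx1 mul1mx scaleN1r -mulmxN opprB.
Qed.

End Representation.

Section RealRepresentation.

Variables (F : realFieldType) (gT : finGroupType) (G : {group gT}) (n : nat).
Variable rG : mx_representation F G n.

Lemma repr_mxV_similar_trmx :
  exists2 B, B \in unitmx & {in G, forall g, rG g^-1%g = B *m (rG g)^T *m invmx B}.
Proof.
pose B := \sum_(x in G) rG x *m (rG x)^T.
have rG_B h : h \in G -> rG h *m B *m (rG h)^T = B.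
  move=> Gh; rewrite mulmx_sumr mulmx_suml [RHS](reindex_inj (mulgI h)) /=.
  apply: eq_big => [x|x Gx]; first by rewrite groupMl.
  by rewrite repr_mxM // trmx_mul !mulmxA.
have norm2 (w : 'rV[F]_n) : (w *m w^T) 0 0 = \sum_j w 0 j ^+ 2.
  by rewrite mxE; apply: eq_bigr => j _; rewrite mxE expr2.
have B_unit : B \in unitmx.
  rewrite -row_free_unit -kermx_eq0; apply/rowV0P => v /sub_kermxP vB0.
  have vBv : (v *m B *m v^T) 0 0 = \sum_(x in G) \sum_j (v *m rG x) 0 j ^+ 2.
    rewrite mulmx_sumr mulmx_suml summxE; apply: eq_bigr => x _.
    by rewrite -norm2 trmx_mul !mulmxA.
  rewrite vB0 mul0mx mxE in vBv.
  have vrG0 : {in G, forall x, \sum_j (v *m rG x) 0 j ^+ 2 = 0}.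
    apply: psumr_eq0P => [x _|]; last by rewrite -vBv.
    by apply: sumr_ge0 => j _; exact: sqr_ge0.
  have := vrG0 1%g (group1 G); rewrite repr_mx1 mulmx1 => /psumr_eq0P v0.
  apply/rowP => j; apply/eqP; rewrite mxE -sqrf_eq0 v0 // => k _; exact: sqr_ge0.
exists B => // g Gg.
have rGg_unit := repr_mx_unit rG Gg.
have rGgV : rG g *m (B *m (rG g)^T *m invmx B) = 1%:M by rewrite !mulmxA rG_B // mulmxV.
by rewrite repr_mxV // -[LHS]mulmx1 -rGgV mulKmx.
Qed.

End RealRepresentation.

Section OddRealRepresentation.

Variables (F : rcfType) (gT : finGroupType) (G : {group gT}) (n : nat).
Variable rG : mx_representation F G n.
Hypotheses (odd_n : odd n) (irr : mx_irreducible rG).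

Lemma odd_irr_centgmx_scalar C : centgmx rG C -> exists a, C = a%:M.
Proof.
move=> cC; have [a] : {a | root (char_poly C) a}.
  by apply: odd_poly_root; rewrite size_char_poly /= negbK.
rewrite -eigenvalue_root_char => eig_a; exists a.
have modU : mxmodule rG (eigenspace C a).
  by apply/mxmoduleP => x Gx; apply: comm_mx_stable_eigenspace; exact: (centgmxP cC).
have [_ /(_ _ modU eig_a)] := (mx_irrP rG).1 irr.
rewrite -sub1mx => /sub_kermxP; rewrite mul1mx => /eqP.
by rewrite subr_eq0 => /eqP.
Qed.

Lemma inv_half_sum_repr g : odd #|G| -> g \in G -> rG g != 1%:M ->
  1%:M + (\sum_(x in inv_half G) rG x) *+ 2 = 0.
Proof.
move=> oddG Gg ntg; have sPG := subsetP (inv_half_sub G).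
set S := \sum_(x in inv_half G) rG x.
have cS : centgmx rG S.
  apply/centgmxP => y Gy; rewrite mulmx_suml mulmx_sumr.
  rewrite [RHS](reindex_inj (conjg_inj y)) /=.
  apply: eq_big => [x|x Px]; first by rewrite inv_halfJ.
  have Gx := sPG x Px.
  by rewrite -!repr_mxM ?groupJ // conjgE !mulgA mulgV mul1g.
have [a Sa] := odd_irr_centgmx_scalar cS.
have [B B_unit rGV] := repr_mxV_similar_trmx rG.
have SV : \sum_(x in inv_half G) rG x^-1%g = a%:M.
  rewrite (eq_bigr (fun x => B *m (rG x)^T *m invmx B)) => [|x Px].
    rewrite -mulmx_suml -mulmx_sumr -raddf_sum /= -/S Sa tr_scalar_mx.
    by rewrite scalar_mxC mulmxK.
  exact: rGV (sPG x Px).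
rewrite -(sum_repr_eq0 irr Gg ntg) (sum_inv_half (fun x => rG x) oddG) repr_mx1.
by rewrite SV -/S Sa mulr2n addrA.
Qed.

Lemma odd_irr_repr_trivial : odd #|G| -> {in G, forall g, rG g = 1%:M}.
Proof.
move=> oddG g Gg; apply/eqP/negP => /negP ntg.
have S2 := inv_half_sum_repr oddG Gg ntg.
have tr_eq0 h : h \in G ->
    \tr (rG h) + (\sum_(x in inv_half G) \tr (rG (x * h)%g)) *+ 2 = 0.
  move=> Gh; have := congr1 (fun A => \tr (A *m rG h)) S2.
  rewrite /= mul0mx mxtrace0 mulmxDl mul1mx mulr2n mulmxDl mulmx_suml !raddfD raddf_sum.
  rewrite /= -mulr2n => /(eq_trans _); apply; congr (_ + _ *+ 2).
  by apply: eq_bigr => x Px; rewrite repr_mxM // (subsetP (inv_half_sub G)).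
have := translate_sum_mul2_eq0 (inv_half_sub G) tr_eq0 (group1 G).
rewrite repr_mx1 mxtrace1 => /eqP; rewrite pnatr_eq0 => /eqP n0.
by move: odd_n; rewrite n0.
Qed.

End OddRealRepresentation.

Lemma aut_split_order2_conj (gT : finGroupType) (G : {group gT})
    (T : {group {perm gT}}) a :
  #|T| = 2%N -> (Inn G ><| T = Aut G)%g -> a \in Aut G ->
  exists t : {perm gT}, [/\ {in G, forall x, t x \in G}, {in G, forall x, t (t x) = x}
    & exists2 k, k \in G & {in G, forall x, a x = t x ^ k}%g].
Proof.
move=> cardT defAut; rewrite -(sdprodWC defAut).
case/mulsgP=> t i Tt /morphimP[k _ Gk ->] ->.
have AutT : t \in Aut G by rewrite -(sdprodWC defAut) (subsetP (mulG_subl _ _)).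
exists t; split=> [x Gx|x _|]; first exact: Aut_closed.
  by rewrite -permM -expg2 -cardT expg_cardG // perm1.
exists k => // x Gx.
by rewrite permM norm_conj_autE ?(subsetP (normG G)) ?Aut_closed.
Qed.

Unset Implicit Arguments.

Theorem lemma4p4p2 (gT : finGroupType) (G : {group gT}) :
  simple G -> ~~ abelian G -> aut_split_by_order2 G ->
  eigenvalue_one_property G.
Proof.
move=> simG _ [T [cardT defAut]] n rG odd_n irr [g Gg ntg] m [m_unit [m_norm _]].
move=> [e e_gt0 m_e]; have faithful := simple_repr_faithful simG Gg ntg.
have [a Aa rGa] := repr_normalizer_aut faithful m_unit m_norm.
have [t [tG tK [k Gk a_tk]]] := aut_split_order2_conj cardT defAut Aa.
pose M := rG k *m m.
have twist : {in G, forall x, M *m rG x = rG (t x) *m M}.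
  move=> x Gx; have m_rGx : m *m rG x = rG (a x) *m m by rewrite rGa // mulmxKV.
  rewrite -mulmxA m_rGx mulmxA a_tk // -repr_mxM ?groupJ ?tG //.
  by rewrite conjgE !mulgA mulgV mul1g repr_mxM ?tG // mulmxA.
have [mu M2_mu] := odd_irr_centgmx_scalar odd_n irr (twisted_sqr_centgmx tG tK twist).
have M2 : M *m M = 1%:M.
  apply: (odd_sqrmx_scalar_eq1 odd_n M2_mu).
  rewrite det_mulmx exprMn (det_sqr_eq1 e_gt0 m_e) (@det_sqr_eq1 _ _ _ #|G|) ?mulr1 //.
  by rewrite -repr_mx_expg // expg_cardG // repr_mx1.
have [eig1|/(involutive_mx_no_eigenvalue1 M2) M_N1] := boolP (eigenvalue M 1).
  by exists k.
have evenG : (2 %| #|G|)%N.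
  rewrite dvdn2; apply: contra ntg => oddG.
  by rewrite (odd_irr_repr_trivial odd_n irr oddG Gg).
have [h Gh eigN1] := even_faithful_eigenvalueN1 evenG faithful.
exists (h * k)%g; first by rewrite groupM.
by rewrite repr_mxM // -mulmxA -/M M_N1 mulmxN mulmx1 eigenvalueN.
Qed.
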